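(* Let $\lambda_1,\lambda_2\ge0$, let $\mathbf m\in\mathcal B(\lambda+\rho)_{res}$ be the head of its resonance family $RF(\mathbf m)$, with decoration $d=d(\mathbf m)>0$ and bounding data $s_2,s_5,s_6$. If $RF(\mathbf m)\cap\mathcal B(\lambda+\rho)=\emptyset$, then $d>\min\{s_2,s_5\}+s_6+2$.
   Context: For $\mathbf m\in\mathbb Z_{\ge0}^6$ and integers $\lambda_1,\lambda_2\ge0$: $s_1=\lambda_2+m_5+m_6-m_1-m_2-m_3$, $s_2=\lambda_2+m_5+m_6-m_2-2m_3$, $s_3=\lambda_2+m_6-m_3-m_4$, $s_4=\lambda_2+m_6-m_4-m_5$, $s_5=\lambda_2-m_5$, $s_6=\lambda_1-m_6$. $\mathcal B(\lambda+\rho)$: all $s_j\ge-1$ and $2s_3-s_4\ge-1$. $\mathcal B(\lambda+\rho)_{res}$: $m_3=m_5$, $s_j\ge-1$ for $j\in\{1,2,5,6\}$, $s_3=s_4\le0$ even; decoration $d(\mathbf m)=-s_3/2$. Weight $k(\mathbf m)=(m_2+3m_3+2m_4+3m_5+m_6,\ m_1+m_2+2m_3+m_4+m_5)$. Arrays $\left[\begin{smallmatrix}a&b&c&b&d\\&x&y&z&\\&&k&&\end{smallmatrix}\right]$ (entries in $\mathbb Z_{\ge0}$) with operators: $e_1$: $(a,c,d;y;k)\mapsto(a-1,c+1,d-1;y+1;k+1)$, zero if $\min\{a,d\}=0$; $e_2$: $(b,c;x,z;k)\mapsto(b-1,c+3;x+1,z+1;k+1)$, zero if $b=0$; $f_1$: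 $(a,c,d;y;k)\mapsto(a+1,c-1,d+1;y-1;k-1)$, zero if $\min\{c,y,k\}=0$; $f_2$: $(b,c;x,z;k)\mapsto(b+1,c-3;x-1,z-1;k-1)$, zero if $\min\{x,z,k\}=0$ or $c<3$ (unlisted entries unchanged; both copies of $b$ change together). $A(\mathbf m)=\left[\begin{smallmatrix}m_2&m_5&m_4&m_5&m_6\\&s_2+1&s_6+1&s_5+1&\\&&d(\mathbf m)&&\end{smallmatrix}\right]$. For an array $A$, $\epsilon_i(A)=\max\{n\ge0:e_i^n(A)\ne0\}$ and $\mathrm{hd}(A)=e_1^{\epsilon_1(A)}e_2^{\epsilon_2(A)}(A)$. On $\mathcal B(\lambda+\rho)_{res}$, $\mathbf m\sim\mathbf n$ iff $k(\mathbf m)=k(\mathbf n)$ and $\mathrm{hd}(A(\mathbf m))=\mathrm{hd}(A(\mathbf n))$; the class of $\mathbf m$ is its resonance family $RF(\mathbf m)$, whose head is the unique element $\mathbf n$ with $A(\mathbf n)=\mathrm{hd}(A(\mathbf n))$. *)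

From Stdlib Require Import ZArith Arith Bool.
Open Scope Z_scope.

Record M6 := mkM6 { m1 : nat; m2 : nat; m3 : nat; m4 : nat; m5 : nat; m6 : nat }.


Definition s1 (lam1 lam2 : nat) (m : M6) : Z :=
  Z.of_nat lam2 + Z.of_nat (m5 m) + Z.of_nat (m6 m) - Z.of_nat (m1 m) - Z.of_nat (m2 m) - Z.of_nat (m3 m).
Definition s2 (lam1 lam2 : nat) (m : M6) : Z :=
  Z.of_nat lam2 + Z.of_nat (m5 m) + Z.of_nat (m6 m) - Z.of_nat (m2 m) - 2 * Z.of_nat (m3 m).
Definition s3 (lam1 lam2 : nat) (m : M6) : Z := Z.of_nat lam2 + Z.of_nat (m6 m) - Z.of_nat (m3 m) - Z.of_nat (m4 m).
Definition s4 (lam1 lam2 : nat) (m : M6) : Z := Z.of_nat lam2 + Z.of_nat (m6 m) - Z.of_nat (m4 m) - Z.of_nat (m5 m).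
Definition s5 (lam1 lam2 : nat) (m : M6) : Z := Z.of_nat lam2 - Z.of_nat (m5 m).
Definition s6 (lam1 lam2 : nat) (m : M6) : Z := Z.of_nat lam1 - Z.of_nat (m6 m).

Definition inB (lam1 lam2 : nat) (m : M6) : Prop :=
  s1 lam1 lam2 m >= -1 /\ s2 lam1 lam2 m >= -1 /\ s3 lam1 lam2 m >= -1 /\ s4 lam1 lam2 m >= -1 /\ s5 lam1 lam2 m >= -1 /\ s6 lam1 lam2 m >= -1
  /\ 2 * s3 lam1 lam2 m - s4 lam1 lam2 m >= -1.

Definition inBres (lam1 lam2 : nat) (m : M6) : Prop :=
  m3 m = m5 m /\
  s1 lam1 lam2 m >= -1 /\ s2 lam1 lam2 m >= -1 /\ s5 lam1 lam2 m >= -1 /\ s6 lam1 lam2 m >= -1 /\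
  s3 lam1 lam2 m = s4 lam1 lam2 m /\ s3 lam1 lam2 m <= 0 /\ Z.Even (s3 lam1 lam2 m).

Definition deco (lam1 lam2 : nat) (m : M6) : Z := - s3 lam1 lam2 m / 2.

Definition weight (m : M6) : nat * nat :=
  ((m2 m + 3 * m3 m + 2 * m4 m + 3 * m5 m + m6 m)%nat,
   (m1 m + m2 m + 2 * m3 m + m4 m + m5 m)%nat).

(* Arrays [a b c b d ; x y z ; k] with entries in Z_{>=0} *)
Record Arr := mkArr { ar_a : nat; ar_b : nat; ar_c : nat; ar_d : nat;
                      ar_x : nat; ar_y : nat; ar_z : nat; ar_k : nat }.

(* None encodes the zero result *)
Definition e1 (A : Arr) : option Arr :=
  if (Nat.min (ar_a A) (ar_d A) =? 0)%nat then None
  else Some (mkArr (ar_a A - 1) (ar_b A) (ar_c A + 1) (ar_d A - 1)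
                   (ar_x A) (ar_y A + 1) (ar_z A) (ar_k A + 1)).
Definition e2 (A : Arr) : option Arr :=
  if (ar_b A =? 0)%nat then None
  else Some (mkArr (ar_a A) (ar_b A - 1) (ar_c A + 3) (ar_d A)
                   (ar_x A + 1) (ar_y A) (ar_z A + 1) (ar_k A + 1)).
Definition f1 (A : Arr) : option Arr :=
  if (Nat.min (ar_c A) (Nat.min (ar_y A) (ar_k A)) =? 0)%nat then None
  else Some (mkArr (ar_a A + 1) (ar_b A) (ar_c A - 1) (ar_d A + 1)
                   (ar_x A) (ar_y A - 1) (ar_z A) (ar_k A - 1)).
Definition f2 (A : Arr) : option Arr :=
  if ((Nat.min (ar_x A) (Nat.min (ar_z A) (ar_k A)) =? 0)%nat || (ar_c A <? 3)%nat)%bool then None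
  else Some (mkArr (ar_a A) (ar_b A + 1) (ar_c A - 3) (ar_d A)
                   (ar_x A - 1) (ar_y A) (ar_z A - 1) (ar_k A - 1)).

Fixpoint iterop (e : Arr -> option Arr) (n : nat) (A : Arr) : option Arr :=
  match n with
  | O => Some A
  | S n' => match iterop e n' A with None => None | Some B => e B end
  end.

Definition IsEps (e : Arr -> option Arr) (A : Arr) (n : nat) : Prop :=
  iterop e n A <> None /\ (forall k, iterop e k A <> None -> (k <= n)%nat).

Definition IsHd (A H : Arr) : Prop :=
  exists n1 n2, IsEps e1 A n1 /\ IsEps e2 A n2 /\
    match iterop e2 n2 A with
    | None => False
    | Some B => iterop e1 n1 B = Some H
    end.

(* the array A(m) (entries are nonnegative on B_res) *)
Definition arrA (lam1 lam2 : nat) (m : M6) : Arr :=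
  mkArr (m2 m) (m5 m) (m4 m) (m6 m)
        (Z.to_nat (s2 lam1 lam2 m + 1)) (Z.to_nat (s6 lam1 lam2 m + 1))
        (Z.to_nat (s5 lam1 lam2 m + 1)) (Z.to_nat (deco lam1 lam2 m)).

Definition resEquiv (lam1 lam2 : nat) (m n : M6) : Prop :=
  weight m = weight n /\
  exists H, IsHd (arrA lam1 lam2 m) H /\ IsHd (arrA lam1 lam2 n) H.

Definition IsHead (lam1 lam2 : nat) (m : M6) : Prop :=
  IsHd (arrA lam1 lam2 m) (arrA lam1 lam2 m).

From Stdlib Require Import ZArith Lia.
Open Scope Z_scope.

(* A head m has m_5 = m_3 = 0 and min(m_2, m_6) = 0, since e_2 and e_1 act trivially on A(m).
   Pushing it down by f_1^i f_2^j with i + j = d(m) gives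
   n = (m_1, m_2 + i, j, m_4 - i - 3j, j, m_6 + i), whose decoration is 0 and whose head is m again;
   its bounding data are s_2 - j, s_5 - j and s_6 - i, so n lies in B(lambda + rho) as soon as
   i <= s_6 + 1 and j <= min(s_2, s_5) + 1.  Such a split of d(m) exists whenever
   d(m) <= min(s_2, s_5) + s_6 + 2. *)

Lemma iterop_None_le (e : Arr -> option Arr) (A : Arr) (k l : nat) :
  (k <= l)%nat -> iterop e k A = None -> iterop e l A = None.
Proof.
  intros Hkl Hk; induction Hkl as [|l _ IH]; [exact Hk|].
  simpl; rewrite IH; reflexivity.
Qed.

Lemma IsEps_intro (e : Arr -> option Arr) (A : Arr) (n : nat) :
  iterop e n A <> None -> iterop e (S n) A = None -> IsEps e A n.
Proof.
  intros Hn HSn; split; [exact Hn|].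
  intros k Hk; destruct (Nat.le_gt_cases k n) as [Hle|Hgt]; [exact Hle|].
  exfalso; exact (Hk (iterop_None_le e A (S n) k Hgt HSn)).
Qed.

Lemma IsEps_unique (e : Arr -> option Arr) (A : Arr) (n n' : nat) :
  IsEps e A n -> IsEps e A n' -> n = n'.
Proof. intros [Hn Hmax] [Hn' Hmax']; specialize (Hmax _ Hn'); specialize (Hmax' _ Hn); lia. Qed.

Lemma iterop_e2 (A : Arr) (k : nat) : (k <= ar_b A)%nat ->
  iterop e2 k A = Some (mkArr (ar_a A) (ar_b A - k) (ar_c A + 3 * k) (ar_d A)
                              (ar_x A + k) (ar_y A) (ar_z A + k) (ar_k A + k)).
Proof.
  induction k as [|k IH]; intros Hk; simpl.
  - destruct A; simpl; f_equal; f_equal; lia.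
  - rewrite IH by lia; unfold e2; simpl.
    destruct (Nat.eqb_spec (ar_b A - k) 0); [lia|].
    f_equal; f_equal; lia.
Qed.

Lemma iterop_e1 (A : Arr) (k : nat) : (k <= Nat.min (ar_a A) (ar_d A))%nat ->
  iterop e1 k A = Some (mkArr (ar_a A - k) (ar_b A) (ar_c A + k) (ar_d A - k)
                              (ar_x A) (ar_y A + k) (ar_z A) (ar_k A + k)).
Proof.
  induction k as [|k IH]; intros Hk; simpl.
  - destruct A; simpl; f_equal; f_equal; lia.
  - rewrite IH by lia; unfold e1; simpl.
    destruct (Nat.eqb_spec (Nat.min (ar_a A - k) (ar_d A - k)) 0); [lia|].
    f_equal; f_equal; lia.
Qed.

Lemma IsEps_e2 (A : Arr) : IsEps e2 A (ar_b A).
Proof.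
  apply IsEps_intro; simpl; rewrite iterop_e2 by lia; [discriminate|].
  unfold e2; simpl; rewrite Nat.sub_diag; reflexivity.
Qed.

Lemma IsEps_e1 (A : Arr) : IsEps e1 A (Nat.min (ar_a A) (ar_d A)).
Proof.
  apply IsEps_intro; simpl; rewrite iterop_e1 by lia; [discriminate|].
  unfold e1; simpl.
  destruct (Nat.eqb_spec (Nat.min (ar_a A - Nat.min (ar_a A) (ar_d A))
                                  (ar_d A - Nat.min (ar_a A) (ar_d A))) 0); [reflexivity|lia].
Qed.

Definition hd (A : Arr) : Arr :=
  let n1 := Nat.min (ar_a A) (ar_d A) in
  mkArr (ar_a A - n1) 0 (ar_c A + 3 * ar_b A + n1) (ar_d A - n1)
        (ar_x A + ar_b A) (ar_y A + n1) (ar_z A + ar_b A) (ar_k A + ar_b A + n1).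

Lemma iterop_e1_e2_hd (A : Arr) :
  match iterop e2 (ar_b A) A with
  | None => False
  | Some B => iterop e1 (Nat.min (ar_a A) (ar_d A)) B = Some (hd A)
  end.
Proof.
  rewrite iterop_e2 by lia; rewrite iterop_e1; simpl; [|lia].
  unfold hd; f_equal; f_equal; lia.
Qed.

Lemma IsHd_hd (A : Arr) : IsHd A (hd A).
Proof.
  exists (Nat.min (ar_a A) (ar_d A)), (ar_b A).
  split; [apply IsEps_e1|]; split; [apply IsEps_e2|].
  apply iterop_e1_e2_hd.
Qed.

Lemma IsHd_functional (A H : Arr) : IsHd A H -> H = hd A.
Proof.
  intros (n1 & n2 & Hn1 & Hn2 & Hit).
  rewrite (IsEps_unique _ _ _ _ Hn1 (IsEps_e1 A)),
          (IsEps_unique _ _ _ _ Hn2 (IsEps_e2 A)) in Hit.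
  pose proof (iterop_e1_e2_hd A) as Hhd.
  destruct (iterop e2 (ar_b A) A); [|contradiction].
  rewrite Hit in Hhd; injection Hhd; trivial.
Qed.

Lemma IsHd_self (A : Arr) :
  IsHd A A -> ar_b A = 0%nat /\ Nat.min (ar_a A) (ar_d A) = 0%nat.
Proof. intros HA; pose proof (f_equal ar_k (IsHd_functional A A HA)); simpl in *; lia. Qed.

Lemma inBres_s3 (lam1 lam2 : nat) (m : M6) :
  inBres lam1 lam2 m -> s3 lam1 lam2 m = - 2 * deco lam1 lam2 m.
Proof.
  intros (_ & _ & _ & _ & _ & _ & _ & t & Ht); unfold deco; rewrite Ht.
  replace (- (2 * t)) with (- t * 2) by ring; rewrite Z.div_mul; lia.
Qed.

Section FamilyMember.

Variables (lam1 lam2 : nat) (m : M6) (i j : nat).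
Hypothesis Hres : inBres lam1 lam2 m.
Hypothesis Hm5 : m5 m = 0%nat.
Hypothesis Hdeco : Z.of_nat (i + j) = deco lam1 lam2 m.
(* Excludes truncation in the fourth entry of [family_member]. *)
Hypothesis Hm4 : (i + 3 * j <= m4 m)%nat.

Definition family_member : M6 :=
  mkM6 (m1 m) (m2 m + i) j (m4 m - i - 3 * j) j (m6 m + i).

Let n := family_member.

Lemma s_family_member :
  s1 lam1 lam2 n = s1 lam1 lam2 m /\ s2 lam1 lam2 n = s2 lam1 lam2 m - Z.of_nat j /\
  s3 lam1 lam2 n = 0 /\ s4 lam1 lam2 n = 0 /\
  s5 lam1 lam2 n = s5 lam1 lam2 m - Z.of_nat j /\ s6 lam1 lam2 n = s6 lam1 lam2 m - Z.of_nat i.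
Proof.
  pose proof (inBres_s3 _ _ _ Hres) as Hs3.
  destruct Hres as (Hm35 & _).
  unfold n, family_member, s1, s2, s3, s4, s5, s6 in Hs3 |- *; cbn [m1 m2 m3 m4 m5 m6].
  repeat split; lia.
Qed.

Lemma weight_family_member : weight n = weight m.
Proof.
  destruct Hres as (Hm35 & _).
  unfold weight, n, family_member; simpl; f_equal; lia.
Qed.

Hypothesis Hmin : Nat.min (m2 m) (m6 m) = 0%nat.
Hypothesis Hi : Z.of_nat i <= s6 lam1 lam2 m + 1.
Hypothesis Hj : Z.of_nat j <= Z.min (s2 lam1 lam2 m) (s5 lam1 lam2 m) + 1.

Lemma family_member_inB : inB lam1 lam2 n.
Proof.
  unfold inB; destruct s_family_member as (-> & -> & -> & -> & -> & ->).
  destruct Hres as (_ & Hs1 & _); lia.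
Qed.

Lemma family_member_inBres : inBres lam1 lam2 n.
Proof.
  destruct family_member_inB as (Hs1 & Hs2 & _ & _ & Hs5 & Hs6 & _).
  destruct s_family_member as (_ & _ & Hs3 & Hs4 & _ & _).
  repeat split; try assumption; try lia.
  rewrite Hs3; exists 0; reflexivity.
Qed.

Lemma hd_arrA_family_member : hd (arrA lam1 lam2 n) = arrA lam1 lam2 m.
Proof.
  destruct s_family_member as (_ & Hs2 & Hs3 & _ & Hs5 & Hs6).
  destruct family_member_inB as (_ & Hs2n & _ & _ & Hs5n & Hs6n & _).
  assert (Hdeco_n : deco lam1 lam2 n = 0) by (unfold deco; rewrite Hs3; reflexivity).
  unfold hd, arrA; rewrite Hs2, Hs5, Hs6, Hdeco_n in *.
  unfold n, family_member; simpl.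
  f_equal; lia.
Qed.

Lemma family_member_resEquiv : IsHead lam1 lam2 m -> resEquiv lam1 lam2 n m.
Proof.
  intros Hhead; split; [exact weight_family_member|].
  exists (arrA lam1 lam2 m); split; [|exact Hhead].
  rewrite <- hd_arrA_family_member; apply IsHd_hd.
Qed.

End FamilyMember.

Theorem mainTheorem9 (lam1 lam2 : nat) (m : M6) :
  inBres lam1 lam2 m ->
  IsHead lam1 lam2 m ->
  deco lam1 lam2 m > 0 ->
  (forall n : M6, inBres lam1 lam2 n -> resEquiv lam1 lam2 n m -> ~ inB lam1 lam2 n) ->
  deco lam1 lam2 m > Z.min (s2 lam1 lam2 m) (s5 lam1 lam2 m) + s6 lam1 lam2 m + 2.
Proof.
  intros Hres Hhead _ Hempty.
  destruct (IsHd_self _ Hhead) as [Hm5 Hmin]; simpl in Hm5, Hmin.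
  pose proof (inBres_s3 _ _ _ Hres) as Hs3.
  pose proof Hres as (Hm35 & _ & Hs2 & Hs5 & Hs6 & _ & Hs3le & _).
  apply Z.lt_gt, Z.nle_gt; intros Hbound.
  set (D := deco lam1 lam2 m) in *.
  (* Load i up to its bound s_6 + 1 first; this also keeps i + 3j within m_4. *)
  set (j := Z.to_nat (Z.max 0 (D - s6 lam1 lam2 m - 1))).
  set (i := Z.to_nat (D - Z.of_nat j)).
  assert (Hj_def : Z.of_nat j = Z.max 0 (D - s6 lam1 lam2 m - 1)) by (unfold j; lia).
  assert (Hi_def : Z.of_nat i = D - Z.of_nat j) by (unfold i; lia).
  clearbody i j.
  assert (Hdeco : Z.of_nat (i + j) = D) by lia.
  assert (Hi : Z.of_nat i <= s6 lam1 lam2 m + 1) by lia.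
  assert (Hj : Z.of_nat j <= Z.min (s2 lam1 lam2 m) (s5 lam1 lam2 m) + 1) by lia.
  assert (Hm4 : (i + 3 * j <= m4 m)%nat) by (unfold s3, s5, s6 in *; lia).
  apply (Hempty (family_member m i j));
    [apply family_member_inBres | apply family_member_resEquiv | apply family_member_inB];
    assumption.
Qed.
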